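(* Assume $\lambda_1<\lambda_2$ and $\lambda_1<\lambda_3$, fix $a,b>0$ and $\Delta>0$ large enough that the contour $L$ and the function $\varphi$ below are defined, and let $E_1=\{y\in\mathbb Z^2: y_2>0,y_3>0\}$. Then: (1) for every $y\in E_1$, $\sum_{z\ne y}s_{yz}(\varphi(z)-\varphi(y))=\langle (u_2^{-1},u_3^{-1}),M_F\rangle$ with $M_F=(\lambda_2-\lambda_1,\lambda_3-\lambda_1)$, in particular it does not depend on $y$; (2) there exist constants $C,\gamma>0$ such that $\sum_{z\ne y}r_{yz}(\varphi(z)-\varphi(y))\le-\gamma\,\varphi(y)$ for all $y\in E_1$ with $\varphi(y)>C$.
   Context: Markov chain $Y(n)=(y_2,y_3)\in\mathbb Z^2$ (relative coordinates of the 3-processor cascade model, time normalized so that $\lambda_1+\lambda_2+\lambda_3+\beta_{12}+\beta_{23}=1$, all parameters positive), with transition probabilities $p_{yz}=s_{yz}+r_{yz}$ for $z\ne y$. Free part: $s_{y,y+(1,0)}=\lambda_2$, $s_{y,y+(0,1)}=\lambda_3$, $s_{y,y-(1,1)}=\lambda_1$, others $0$. Rollback part ($b_2=\lambda_2/(\lambda_2+\beta_{23})$): if $y_2>0,y_3\le0$: $r_{y,(0,y_3)}=\beta_{12}$; if $y_2<y_3$: $\beta_{23}$ is added to $r_{y,(y_2,y_2)}$; if $0<y_3\le y_2$: $\beta_{12}(1-b_2)^{z_3}b_2$ is added to $r_{y,(0,z_3)}$ for $0\le z_3<y_3$ and $\beta_{12}(1-b_2)^{y_3}$ to $r_{y,(0,y_3)}$;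 if $0<y_2<y_3$: $\beta_{12}(1-b_2)^{z_3}b_2$ is added to $r_{y,(0,z_3)}$ for $0\le z_3\le y_2$ and $\beta_{12}(1-b_2)^{y_2+1}$ to $r_{y,(0,y_3)}$. Contour $L$: with $e(y)=ay_2^2+b(y_2-y_3)^2$, let $T_3$, $T_2$ be the points of the ellipse $\{e=1\}$ where the outer normal has direction $(-\Delta,1)$, resp. $(1,-\Delta)$; $K_3=(0,u_3)$ is where the tangent at $T_3$ meets the $y_3$-axis and $K_2=(u_2,0)$ where the tangent at $T_2$ meets the $y_2$-axis ($u_2,u_3>0$). $L$ consists of segment $K_3K_2$, segment $K_2T_2$, the ellipse arc $T_2T_3$ through $(-a^{-1/2},-a^{-1/2})$, and segment $T_3K_3$; each open ray from $0$ meets $L$ once. $\varphi(0)=0$ and for $y\ne0$, $\varphi(y)>0$ is the unique number with $y/\varphi(y)\in L$ (so $\varphi(y)=y_2/u_2+y_3/u_3$ on the closed positive quadrant). *)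

From Stdlib Require Import Reals Lra ZArith List ClassicalEpsilon.
Open Scope R_scope.

(** Points of R^2, written (y2, y3). *)
Definition pt := (R * R)%type.
Definition dot (u v : pt) : R := fst u * fst v + snd u * snd v.
Definition psub (u v : pt) : pt := (fst u - fst v, snd u - snd v).
Definition pscale (t : R) (u : pt) : pt := (t * fst u, t * snd u).
Definition cross (u v : pt) : R := fst u * snd v - snd u * fst v.

Definition ell (a b : R) (y : pt) : R := a * (fst y) ^ 2 + b * (fst y - snd y) ^ 2.
Definition ell_grad (a b : R) (y : pt) : pt :=
  (2 * a * fst y + 2 * b * (fst y - snd y), - (2 * b * (fst y - snd y))).

Definition outer_normal_dir (a b : R) (T d : pt) : Prop :=
  ell a b T = 1 /\ exists c, 0 < c /\ ell_grad a b T = pscale c d.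

Definition segment (A B : pt) (y : pt) : Prop :=
  exists t, 0 <= t <= 1 /\
    y = ((1 - t) * fst A + t * fst B, (1 - t) * snd A + t * snd B).

(** Closed arc of the ellipse {e=1} with endpoints T2, T3 that contains P:
    the points of the ellipse lying (weakly) on the same side of the chord
    line T2T3 as P. *)
Definition ellipse_arc (a b : R) (T2 T3 P : pt) (y : pt) : Prop :=
  ell a b y = 1 /\
  0 <= cross (psub T3 T2) (psub y T2) * cross (psub T3 T2) (psub P T2).

(** The contour L, with K3 = (0,u3), K2 = (u2,0). *)
Definition contour (a b : R) (T2 T3 : pt) (u2 u3 : R) (y : pt) : Prop :=
  segment (0, u3) (u2, 0) y \/
  segment (u2, 0) T2 y \/
  ellipse_arc a b T2 T3 (- / sqrt a, - / sqrt a) y \/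
  segment T3 (0, u3) y.

(** "Delta is large enough that L and phi are defined": T3, T2 are the points
    of the ellipse with outer normal direction (-Delta,1), (1,-Delta); the
    tangent at T3 meets the y3-axis at (0,u3), u3>0; the tangent at T2 meets
    the y2-axis at (u2,0), u2>0; every open ray from 0 meets L exactly once. *)
Definition contour_ok (a b D : R) (T2 T3 : pt) (u2 u3 : R) : Prop :=
  outer_normal_dir a b T3 (- D, 1) /\
  outer_normal_dir a b T2 (1, - D) /\
  0 < u3 /\ dot (ell_grad a b T3) (psub (0, u3) T3) = 0 /\
  0 < u2 /\ dot (ell_grad a b T2) (psub (u2, 0) T2) = 0 /\
  (forall y : pt, y <> (0, 0) ->
     exists! t, 0 < t /\ contour a b T2 T3 u2 u3 (pscale t y)).

Definition phi (L : pt -> Prop) (y : pt) : R :=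
  match excluded_middle_informative (y = (0, 0)) with
  | left _ => 0
  | right _ => epsilon (inhabits 0) (fun p => 0 < p /\ L (pscale (/ p) y))
  end.

Definition zpt := (Z * Z)%type.
Definition zeq (z w : zpt) : bool := (Z.eqb (fst z) (fst w) && Z.eqb (snd z) (snd w))%bool.

Definition s_free (l1 l2 l3 : R) (y z : zpt) : R :=
  (if zeq z (fst y + 1, snd y)%Z then l2 else 0)
  + (if zeq z (fst y, snd y + 1)%Z then l3 else 0)
  + (if zeq z (fst y - 1, snd y - 1)%Z then l1 else 0).

Definition r_roll (l2 b12 b23 : R) (y z : zpt) : R :=
  let y2 := fst y in let y3 := snd y in
  let z2 := fst z in let z3 := snd z in
  let b2 := l2 / (l2 + b23) in
  (if ((0 <? y2) && (y3 <=? 0) && zeq z (0, y3))%Z%bool then b12 else 0)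
  + (if ((y2 <? y3) && zeq z (y2, y2))%Z%bool then b23 else 0)
  + (if ((0 <? y3) && (y3 <=? y2) && (z2 =? 0) && (0 <=? z3) && (z3 <? y3))%Z%bool
     then b12 * (1 - b2) ^ (Z.to_nat z3) * b2 else 0)
  + (if ((0 <? y3) && (y3 <=? y2) && zeq z (0, y3))%Z%bool
     then b12 * (1 - b2) ^ (Z.to_nat y3) else 0)
  + (if ((0 <? y2) && (y2 <? y3) && (z2 =? 0) && (0 <=? z3) && (z3 <=? y2))%Z%bool
     then b12 * (1 - b2) ^ (Z.to_nat z3) * b2 else 0)
  + (if ((0 <? y2) && (y2 <? y3) && zeq z (0, y3))%Z%bool
     then b12 * (1 - b2) ^ (Z.to_nat (y2 + 1)) else 0).

(** Box [-N,N]^2, N = |y2|+|y3|+1, containing the supports of s_{y.} and r_{y.}. *)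
Definition Zrange (lo hi : Z) : list Z :=
  map (fun k => (lo + Z.of_nat k)%Z) (seq 0 (Z.to_nat (hi - lo + 1))).
Definition box (y : zpt) : list zpt :=
  let N := (Z.abs (fst y) + Z.abs (snd y) + 1)%Z in
  list_prod (Zrange (- N) N) (Zrange (- N) N).

Definition drift (p : zpt -> zpt -> R) (f : zpt -> R) (y : zpt) : R :=
  fold_right Rplus 0
    (map (fun z => if zeq z y then 0 else p y z * (f z - f y)) (box y)).

Definition in_E1 (y : zpt) : Prop := (0 < fst y)%Z /\ (0 < snd y)%Z.

From Stdlib Require Import Reals ZArith List Lia Lra Bool Permutation ClassicalEpsilon.
Open Scope R_scope.

(* On the closed positive quadrant the ray through y meets L on the segment K3K2,
   so phi is the linear form y2/u2 + y3/u3 there, and from E1 every transition of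
   the free part, and every rollback, lands in that quadrant.  The free drift is
   therefore the constant <(1/u2, 1/u3), M_F>.  A beta12-rollback moves to the
   column y2 = 0 at height at most y3 (a geometric mixture of total mass beta12),
   losing at least y2/u2; when y2 < y3 the beta23-rollback to (y2, y2) loses
   (y3 - y2)/u3.  These losses dominate gamma phi(y) for
   gamma = min(beta23, beta12 u2^-1 / (u2^-1 + u3^-1)), on all of E1, so any C
   will do. *)

Definition lsum {A : Type} (l : list A) (g : A -> R) : R := fold_right Rplus 0 (map g l).

Lemma lsum_app {A : Type} (l m : list A) (g : A -> R) :
  lsum (l ++ m) g = lsum l g + lsum m g.
Proof. unfold lsum; induction l as [|x l IH]; simpl; [lra | rewrite IH; ring]. Qed.

Lemma lsum_plus {A : Type} (l : list A) (g h : A -> R) :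
  lsum l (fun z => g z + h z) = lsum l g + lsum l h.
Proof. unfold lsum; induction l as [|x l IH]; simpl; [lra | rewrite IH; ring]. Qed.

Lemma lsum_scal {A : Type} (l : list A) (c : R) (g : A -> R) :
  lsum l (fun z => c * g z) = c * lsum l g.
Proof. unfold lsum; induction l as [|x l IH]; simpl; [ring | rewrite IH; ring]. Qed.

Lemma lsum_ext {A : Type} (l : list A) (g h : A -> R) :
  (forall z, In z l -> g z = h z) -> lsum l g = lsum l h.
Proof.
  unfold lsum; induction l as [|x l IH]; simpl; intros Hgh; [reflexivity|].
  rewrite Hgh, IH by auto. reflexivity.
Qed.

Lemma lsum_map {A B : Type} (l : list A) (f : A -> B) (g : B -> R) :
  lsum (map f l) g = lsum l (fun x => g (f x)).
Proof. unfold lsum; rewrite map_map; reflexivity. Qed.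

Lemma lsum_perm {A : Type} (l m : list A) (g : A -> R) :
  Permutation l m -> lsum l g = lsum m g.
Proof. unfold lsum; induction 1; simpl; lra. Qed.

Lemma lsum_filter {A : Type} (l : list A) (P : A -> bool) (g : A -> R) :
  lsum l (fun z => if P z then g z else 0) = lsum (filter P l) g.
Proof. unfold lsum; induction l as [|x l IH]; simpl; [|destruct (P x); simpl]; lra. Qed.

Lemma lsum_select {A : Type} (l m : list A) (P : A -> bool) (g : A -> R) :
  NoDup l -> NoDup m -> (forall z, P z = true <-> In z m) -> incl m l ->
  lsum l (fun z => if P z then g z else 0) = lsum m g.
Proof.
  intros Hl Hm HP Hml. rewrite lsum_filter. apply lsum_perm, NoDup_Permutation.
  - apply NoDup_filter, Hl.
  - exact Hm.
  - intro z. rewrite filter_In, HP. split; [tauto|]. intros Hz; split; auto.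
Qed.

Lemma geometric_mixture_le (c M x : R) (g : nat -> R) (k : nat) :
  0 <= c <= 1 -> (forall j, (j < k)%nat -> g j <= M) -> x <= M ->
  lsum (seq 0 k) (fun j => (1 - c) ^ j * c * g j) + (1 - c) ^ k * x <= M.
Proof.
  revert x. induction k as [|k IH]; intros x Hc Hg Hx.
  - unfold lsum; simpl; lra.
  - rewrite seq_S, lsum_app. unfold lsum at 2; simpl.
    assert (Hx' : c * g k + (1 - c) * x <= M).
    { assert (g k <= M) by (apply Hg; lia). nra. }
    specialize (IH _ Hc (fun j Hj => Hg j (Nat.lt_lt_succ_r _ _ Hj)) Hx').
    eapply Rle_trans; [|exact IH]. right; ring.
Qed.

Lemma zeq_eq (z w : zpt) : zeq z w = true <-> z = w.
Proof.
  destruct z, w; unfold zeq; simpl. rewrite andb_true_iff, !Z.eqb_eq.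
  split; [intros [-> ->] | intros E; injection E]; auto.
Qed.

Lemma in_Zrange (lo hi x : Z) : (lo <= x <= hi)%Z -> In x (Zrange lo hi).
Proof.
  intros Hx. apply in_map_iff. exists (Z.to_nat (x - lo)).
  split; [lia | apply in_seq; lia].
Qed.

Lemma NoDup_Zrange (lo hi : Z) : NoDup (Zrange lo hi).
Proof.
  apply NoDup_map_NoDup_ForallPairs; [intros x y _ _ E; lia | apply seq_NoDup].
Qed.

Lemma NoDup_list_prod {A B : Type} (l : list A) (m : list B) :
  NoDup l -> NoDup m -> NoDup (list_prod l m).
Proof.
  induction 1 as [|x l Hx Hl IH]; simpl; intros Hm; [constructor|].
  apply NoDup_app; auto.
  - apply NoDup_map_NoDup_ForallPairs; auto. intros u v _ _ E; injection E; auto.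
  - intros [u v] Hxu Hlu. apply in_map_iff in Hxu as [w [E _]]. injection E as <- _.
    apply in_prod_iff in Hlu. tauto.
Qed.

Lemma NoDup_box (y : zpt) : NoDup (box y).
Proof. apply NoDup_list_prod; apply NoDup_Zrange. Qed.

Lemma in_box (y z : zpt) :
  (Z.abs (fst z) <= Z.abs (fst y) + Z.abs (snd y) + 1)%Z ->
  (Z.abs (snd z) <= Z.abs (fst y) + Z.abs (snd y) + 1)%Z -> In z (box y).
Proof. destruct z; simpl; intros. apply in_prod_iff; split; apply in_Zrange; lia. Qed.

Lemma lsum_box_point (y t : zpt) (F : zpt -> R) :
  In t (box y) -> lsum (box y) (fun z => if zeq z t then F z else 0) = F t.
Proof.
  intros Ht. rewrite (lsum_select _ (t :: nil)).
  - unfold lsum; simpl; ring.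
  - apply NoDup_box.
  - repeat constructor; auto.
  - intro z. rewrite zeq_eq. simpl. intuition.
  - intros z [<- | []]; exact Ht.
Qed.

Definition on_column (k : Z) (z : zpt) : bool :=
  ((fst z =? 0) && (0 <=? snd z) && (snd z <? k))%Z.

Lemma lsum_box_column (y : zpt) (k : Z) (F : zpt -> R) :
  (0 <= k <= Z.abs (fst y) + Z.abs (snd y) + 1)%Z ->
  lsum (box y) (fun z => if on_column k z then F z else 0) =
  lsum (seq 0 (Z.to_nat k)) (fun j => F (0%Z, Z.of_nat j)).
Proof.
  intros Hk. rewrite (lsum_select _ (map (fun j => (0%Z, Z.of_nat j)) (seq 0 (Z.to_nat k)))).
  - apply lsum_map.
  - apply NoDup_box.
  - apply NoDup_map_NoDup_ForallPairs; [intros u v _ _ E; injection E; lia | apply seq_NoDup].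
  - intros [z2 z3]. unfold on_column; simpl.
    rewrite !andb_true_iff, Z.eqb_eq, Z.leb_le, Z.ltb_lt, in_map_iff. split.
    + intros [[-> ?] ?]. exists (Z.to_nat z3). split; [f_equal; lia | apply in_seq; lia].
    + intros [j [E Hj]]. injection E as <- <-. apply in_seq in Hj. lia.
  - intros z Hz. apply in_map_iff in Hz as [j [<- Hj]]. apply in_seq in Hj.
    apply in_box; simpl; lia.
Qed.

Lemma drift_as_lsum (p : zpt -> zpt -> R) (f : zpt -> R) (y : zpt) :
  drift p f y = lsum (box y) (fun z => p y z * (f z - f y)).
Proof.
  apply lsum_ext. intros z _.
  destruct (zeq z y) eqn:E; [apply zeq_eq in E; subst; ring | reflexivity].
Qed.

Lemma phi_eq (L : pt -> Prop) (y : pt) (p : R) :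
  (forall y, y <> (0, 0) -> exists! t, 0 < t /\ L (pscale t y)) ->
  y <> (0, 0) -> 0 < p -> L (pscale (/ p) y) -> phi L y = p.
Proof.
  intros Hray Hy Hp HL. unfold phi.
  destruct (excluded_middle_informative (y = (0, 0))) as [E | _]; [contradiction|].
  assert (Hex : exists p, 0 < p /\ L (pscale (/ p) y)) by eauto.
  destruct (epsilon_spec (inhabits 0) _ Hex) as [Hp' HL'].
  destruct (Hray y Hy) as [t [_ Ht]].
  apply Rinv_eq_reg. transitivity t; [symmetry|]; apply Ht; split; auto;
    apply Rinv_0_lt_compat; assumption.
Qed.

Lemma phi_quadrant (a b D : R) (T2 T3 : pt) (u2 u3 x2 x3 : R) :
  contour_ok a b D T2 T3 u2 u3 -> 0 <= x2 -> 0 <= x3 ->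
  phi (contour a b T2 T3 u2 u3) (x2, x3) = / u2 * x2 + / u3 * x3.
Proof.
  intros (_ & _ & Hu3 & _ & Hu2 & _ & Hray) H2 H3.
  assert (0 < / u2) by (apply Rinv_0_lt_compat; lra).
  assert (0 < / u3) by (apply Rinv_0_lt_compat; lra).
  destruct (excluded_middle_informative ((x2, x3) = (0, 0))) as [E | E].
  - unfold phi. destruct excluded_middle_informative; [|contradiction].
    injection E as -> ->. ring.
  - set (p := / u2 * x2 + / u3 * x3).
    assert (Hp : 0 < p).
    { unfold p. destruct (Req_dec x2 0) as [-> | N2]; [destruct (Req_dec x3 0) as [-> | N3]|].
      - contradiction.
      - nra.
      - nra. }
    apply phi_eq; auto.
    left. exists (/ u2 * x2 / p). split.
    + split; [apply Rmult_le_pos; [nra | left; apply Rinv_0_lt_compat; lra]|].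
      apply (Rmult_le_reg_r p); auto. unfold Rdiv.
      rewrite Rmult_assoc, Rinv_l, Rmult_1_r by lra. unfold p; nra.
    + assert (x2 * u3 + x3 * u2 <> 0).
      { replace (x2 * u3 + x3 * u2) with (p * (u2 * u3)) by (unfold p; field; lra).
        apply Rgt_not_eq, Rmult_lt_0_compat; nra. }
      unfold pscale, p; simpl. f_equal; field; repeat split; auto; lra.
Qed.

Definition quadrant_linear (A B : R) (f : zpt -> R) : Prop :=
  forall z2 z3 : Z, (0 <= z2)%Z -> (0 <= z3)%Z -> f (z2, z3) = A * IZR z2 + B * IZR z3.

Lemma drift_s_free (l1 l2 l3 : R) (f : zpt -> R) (y2 y3 : Z) :
  drift (s_free l1 l2 l3) f (y2, y3) =
  l2 * (f (y2 + 1, y3)%Z - f (y2, y3)) + l3 * (f (y2, y3 + 1)%Z - f (y2, y3))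
  + l1 * (f (y2 - 1, y3 - 1)%Z - f (y2, y3)).
Proof.
  rewrite drift_as_lsum.
  rewrite (lsum_ext _ _ (fun z =>
    (if zeq z (y2 + 1, y3)%Z then l2 * (f z - f (y2, y3)) else 0)
    + (if zeq z (y2, y3 + 1)%Z then l3 * (f z - f (y2, y3)) else 0)
    + (if zeq z (y2 - 1, y3 - 1)%Z then l1 * (f z - f (y2, y3)) else 0))).
  - rewrite !lsum_plus, !lsum_box_point by (apply in_box; simpl; lia). reflexivity.
  - intros z _. unfold s_free; simpl. repeat destruct (zeq _ _); ring.
Qed.

Lemma drift_s_free_linear (l1 l2 l3 A B : R) (f : zpt -> R) (y : zpt) :
  quadrant_linear A B f -> in_E1 y ->
  drift (s_free l1 l2 l3) f y = l2 * A + l3 * B - l1 * (A + B).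
Proof.
  destruct y as [y2 y3]. intros Hf [Hy2 Hy3]; simpl in *.
  rewrite drift_s_free, !Hf by lia. rewrite !plus_IZR, !minus_IZR. ring.
Qed.

Ltac decide_Z_tests :=
  repeat match goal with
  | |- context [(?x =? ?y)%Z] => destruct (Z.eqb_spec x y); try (exfalso; lia)
  | |- context [(?x <? ?y)%Z] => destruct (Z.ltb_spec x y); try (exfalso; lia)
  | |- context [(?x <=? ?y)%Z] => destruct (Z.leb_spec x y); try (exfalso; lia)
  end; simpl.

Section Rollback.

Variables l2 b12 b23 : R.
Local Notation b2 := (l2 / (l2 + b23)).
Local Notation r := (r_roll l2 b12 b23).

Lemma r_roll_below_diagonal (y2 y3 : Z) (z : zpt) : (0 < y3 <= y2)%Z ->
  r (y2, y3) z =
  (if on_column y3 z then b12 * (1 - b2) ^ Z.to_nat (snd z) * b2 else 0)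
  + (if zeq z (0, y3)%Z then b12 * (1 - b2) ^ Z.to_nat y3 else 0).
Proof. destruct z; intros. unfold r_roll, on_column, zeq; simpl. decide_Z_tests; ring. Qed.

Lemma r_roll_above_diagonal (y2 y3 : Z) (z : zpt) : (0 < y2 < y3)%Z ->
  r (y2, y3) z =
  (if zeq z (y2, y2) then b23 else 0)
  + (if on_column (y2 + 1) z then b12 * (1 - b2) ^ Z.to_nat (snd z) * b2 else 0)
  + (if zeq z (0, y3)%Z then b12 * (1 - b2) ^ Z.to_nat (y2 + 1) else 0).
Proof. destruct z; intros. unfold r_roll, on_column, zeq; simpl. decide_Z_tests; ring. Qed.

(* Mean change of f under a beta12-rollback from y whose geometric column is cut
   at height k: (0, j) with weight (1 - b2)^j b2 for j < k, and (0, y3) with the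
   remaining mass (1 - b2)^k. *)
Definition column_drift (f : zpt -> R) (y : zpt) (k : Z) : R :=
  lsum (seq 0 (Z.to_nat k)) (fun j => (1 - b2) ^ j * b2 * (f (0%Z, Z.of_nat j) - f y))
  + (1 - b2) ^ Z.to_nat k * (f (0%Z, snd y) - f y).

Lemma lsum_box_column_jumps (f : zpt -> R) (y2 y3 k : Z) :
  (0 <= k <= y3)%Z ->
  lsum (box (y2, y3)) (fun z =>
    (if on_column k z then b12 * (1 - b2) ^ Z.to_nat (snd z) * b2 else 0)
      * (f z - f (y2, y3))
    + (if zeq z (0, y3)%Z then b12 * (1 - b2) ^ Z.to_nat k else 0) * (f z - f (y2, y3)))
  = b12 * column_drift f (y2, y3) k.
Proof.
  intros Hk.
  rewrite (lsum_ext _ _ (fun z =>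
    (if on_column k z then b12 * ((1 - b2) ^ Z.to_nat (snd z) * b2 * (f z - f (y2, y3))) else 0)
    + (if zeq z (0, y3)%Z then b12 * ((1 - b2) ^ Z.to_nat k * (f z - f (y2, y3))) else 0))).
  2: { intros z _. destruct (on_column _ _), (zeq _ _); ring. }
  rewrite lsum_plus, lsum_box_point, lsum_box_column by (try apply in_box; simpl; lia).
  unfold column_drift. rewrite Rmult_plus_distr_l, <- lsum_scal. f_equal.
  apply lsum_ext. intros j _. simpl. rewrite Nat2Z.id. reflexivity.
Qed.

Lemma drift_r_roll_below_diagonal (f : zpt -> R) (y2 y3 : Z) : (0 < y3 <= y2)%Z ->
  drift r f (y2, y3) = b12 * column_drift f (y2, y3) y3.
Proof.
  intros Hy. rewrite drift_as_lsum, <- lsum_box_column_jumps by lia.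
  apply lsum_ext. intros z _. rewrite r_roll_below_diagonal by lia. ring.
Qed.

Lemma drift_r_roll_above_diagonal (f : zpt -> R) (y2 y3 : Z) : (0 < y2 < y3)%Z ->
  drift r f (y2, y3) =
  b23 * (f (y2, y2) - f (y2, y3)) + b12 * column_drift f (y2, y3) (y2 + 1).
Proof.
  intros Hy. rewrite drift_as_lsum, <- lsum_box_column_jumps by lia.
  rewrite <- (lsum_box_point (y2, y3) (y2, y2) (fun z => b23 * (f z - f (y2, y3))))
    by (apply in_box; simpl; lia).
  rewrite <- lsum_plus. apply lsum_ext. intros z _.
  rewrite r_roll_above_diagonal by lia. destruct (zeq _ _); ring.
Qed.

Hypotheses (l2_gt0 : 0 < l2) (b23_gt0 : 0 < b23) (b12_ge0 : 0 <= b12).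
Variables (A B : R) (f : zpt -> R).
Hypotheses (B_ge0 : 0 <= B) (f_linear : quadrant_linear A B f).

Lemma b2_bounds : 0 <= b2 <= 1.
Proof. assert (b2 * (l2 + b23) = l2) by (field; lra). split; nra. Qed.

Lemma column_drift_le (y2 y3 k : Z) : (0 <= y2)%Z -> (0 <= k <= y3)%Z ->
  column_drift f (y2, y3) k <= - (A * IZR y2).
Proof.
  intros Hy2 Hk. apply geometric_mixture_le; [apply b2_bounds | intros j Hj | simpl].
  - assert (IZR (Z.of_nat j) <= IZR y3) by (apply IZR_le; lia).
    rewrite !f_linear by lia. nra.
  - rewrite !f_linear by lia. right; ring.
Qed.

Lemma drift_r_roll_le (gamma : R) (y : zpt) :
  0 <= gamma -> gamma <= b23 -> gamma * (A + B) <= b12 * A -> in_E1 y ->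
  drift r f y <= - gamma * f y.
Proof.
  destruct y as [y2 y3]. intros Hg Hgb23 HgA [Hy2 Hy3]; simpl in *.
  assert (Hfy : f (y2, y3) = A * IZR y2 + B * IZR y3) by (apply f_linear; lia).
  assert (0 <= IZR y2 * (b12 * A - gamma * (A + B)))
    by (apply Rmult_le_pos; [apply IZR_le; lia | lra]).
  destruct (Z_le_gt_dec y3 y2) as [Hbelow | Habove].
  - rewrite drift_r_roll_below_diagonal by lia.
    assert (b12 * column_drift f (y2, y3) y3 <= b12 * - (A * IZR y2))
      by (apply Rmult_le_compat_l; [exact b12_ge0 | apply column_drift_le; lia]).
    assert (IZR y3 <= IZR y2) by (apply IZR_le; lia).
    assert (0 <= gamma * B * (IZR y2 - IZR y3)) by (apply Rmult_le_pos; nra).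
    nra.
  - rewrite drift_r_roll_above_diagonal by lia.
    assert (b12 * column_drift f (y2, y3) (y2 + 1) <= b12 * - (A * IZR y2))
      by (apply Rmult_le_compat_l; [exact b12_ge0 | apply column_drift_le; lia]).
    assert (IZR y2 <= IZR y3) by (apply IZR_le; lia).
    assert (0 <= (b23 - gamma) * B * (IZR y3 - IZR y2)) by (apply Rmult_le_pos; nra).
    rewrite (f_linear y2 y2) by lia. nra.
Qed.

End Rollback.

Theorem lemma5 (l1 l2 l3 b12 b23 a b D : R) (T2 T3 : pt) (u2 u3 : R) :
  0 < l1 -> 0 < l2 -> 0 < l3 -> 0 < b12 -> 0 < b23 ->
  l1 + l2 + l3 + b12 + b23 = 1 ->
  l1 < l2 -> l1 < l3 ->
  0 < a -> 0 < b -> 0 < D ->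
  contour_ok a b D T2 T3 u2 u3 ->
  let ph := fun y : zpt =>
    phi (contour a b T2 T3 u2 u3) (IZR (fst y), IZR (snd y)) in
  (forall y : zpt, in_E1 y ->
     drift (s_free l1 l2 l3) ph y = dot (/ u2, / u3) (l2 - l1, l3 - l1)) /\
  (exists C gamma : R, 0 < C /\ 0 < gamma /\
     forall y : zpt, in_E1 y -> C < ph y ->
       drift (r_roll l2 b12 b23) ph y <= - gamma * ph y).
Proof.
  intros _ Hl2 _ Hb12 Hb23 _ _ _ _ _ _ Hok ph.
  set (A := / u2). set (B := / u3).
  assert (HA : 0 < A) by (apply Rinv_0_lt_compat, Hok).
  assert (HB : 0 < B) by (apply Rinv_0_lt_compat, Hok).
  assert (Hph : quadrant_linear A B ph).
  { intros z2 z3 H2 H3. apply (phi_quadrant a b D); auto; apply IZR_le; assumption. }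
  split.
  - intros y Hy. rewrite (drift_s_free_linear _ _ _ A B) by assumption.
    unfold dot; simpl. fold A B. ring.
  - set (gamma := Rmin b23 (b12 * A / (A + B))).
    assert (Hg : 0 < gamma)
      by (apply Rmin_pos; [|apply Rdiv_lt_0_compat; [apply Rmult_lt_0_compat|]]; lra).
    assert (HgA : gamma * (A + B) <= b12 * A).
    { replace (b12 * A) with (b12 * A / (A + B) * (A + B)) by (field; lra).
      apply Rmult_le_compat_r; [lra | apply Rmin_r]. }
    exists 1, gamma. split; [lra | split; [exact Hg |]].
    intros y Hy _.
    apply (drift_r_roll_le _ _ _ Hl2 Hb23 (Rlt_le _ _ Hb12) A B);
      [lra | exact Hph | lra | apply Rmin_l | exact HgA | exact Hy].
Qed.
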